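(* Let $G$ be a directed multigraph on vertex set $\{0,1,\dots,n+1\}$ with $m$ edges, each edge $(i,j)$ oriented $i\to j$ with $i<j$, having unique source $0$ and unique sink $n+1$, and such that $\operatorname{outdeg}_G(i)=1$ for every $i\in[n]$. Let $d_i=\operatorname{indeg}_G(i)-1$ for $i\in[n]$. Then $$\operatorname{vol}\mathcal F_G(1,0,\dots,0,-1)=K_G\Big(0,d_1,\dots,d_n,-\sum_{i=1}^n d_i\Big)=1.$$
   Context: For a directed multigraph $G$ on $\{0,\dots,n+1\}$ and a vector $\mathbf a=(a_0,\dots,a_{n+1})$ with $\sum_i a_i=0$, the flow polytope $\mathcal F_G(\mathbf a)$ is the set of $f\in\mathbb R_{\ge0}^{E(G)}$ such that at each vertex $v$ the net flow (outgoing minus incoming) equals $a_v$. $K_G(\mathbf a)$ is the number of integer points of $\mathcal F_G(\mathbf a)$. $\operatorname{vol}$ denotes normalized volume: for a $d$-dimensional polytope, $d!$ times its volume with respect to the lattice of integer points in its affine span. *)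

From HB Require Import structures.
From mathcomp Require Import all_boot all_order all_algebra.
From mathcomp Require Import finmap.
From mathcomp Require Import boolp classical_sets cardinality filter reals topology normedtype.
Set Implicit Arguments. Unset Strict Implicit. Unset Printing Implicit Defensive.
Import Order.TTheory GRing.Theory Num.Theory.
Import numFieldNormedType.Exports.
Local Open Scope classical_set_scope.
Local Open Scope ring_scope.

(* ---------------- Directed multigraphs ----------------
   A directed multigraph on the vertex set {0,...,n+1} = 'I_(n.+2) with m
   edges is given by two maps src tgt : 'I_m -> 'I_(n.+2); edge e goes
   from (src e) to (tgt e).  Parallel edges are allowed. *)

Definition indeg (n m : nat) (tgt : 'I_m -> 'I_(n.+2)) (v : 'I_(n.+2)) : nat :=
  #|[set e : 'I_m | tgt e == v]|.

Definition outdeg (n m : nat) (src : 'I_m -> 'I_(n.+2)) (v : 'I_(n.+2)) : nat :=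
  #|[set e : 'I_m | src e == v]|.

Section Flow.
Variable R : realType.

Definition intvec (m : nat) (x : 'rV[R]_m) : Prop :=
  forall e : 'I_m, x 0 e \is a Num.int.

Definition flow_polytope (n m : nat) (src tgt : 'I_m -> 'I_(n.+2))
  (a : 'I_(n.+2) -> R) : set 'rV[R]_m :=
  [set f | (forall e, 0 <= f 0 e) /\
           forall v : 'I_(n.+2),
             \sum_(e | src e == v) f 0 e - \sum_(e | tgt e == v) f 0 e = a v].

(* K_G(a) : number of integer points of F_G(a) (F_G(a) is bounded, hence
   this set is finite and fset_set enumerates it) *)
Definition K_G (n m : nat) (src tgt : 'I_m -> 'I_(n.+2)) (a : 'I_(n.+2) -> R)
  : nat :=
  #|` fset_set [set f | flow_polytope src tgt a f /\ intvec f] |.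

Definition affine_hull (m : nat) (S : set 'rV[R]_m) : set 'rV[R]_m :=
  [set x | exists (k : nat) (p : 'I_k -> 'rV[R]_m) (c : 'I_k -> R),
      (forall i, S (p i)) /\ \sum_i c i = 1 /\ x = \sum_i c i *: p i].

Definition dirspace (m : nat) (S : set 'rV[R]_m) : set 'rV[R]_m :=
  [set v | exists x y, affine_hull S x /\ affine_hull S y /\ v = x - y].

Definition affdim (m : nat) (S : set 'rV[R]_m) : nat :=
  \max_(k < m.+1 | `[< exists A : 'M[R]_(k, m),
                       row_free A /\ forall i, dirspace S (row i A) >]) k.

(* Volume of S relative to the lattice L = aff(S) ∩ Z^m of integer points in
   its affine span, defined as the Jordan content (Riemann-sum limit) with
   respect to that lattice: fix an origin p0 ∈ aff(S) ∩ Z^m; with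
   L0 = dirspace(S) ∩ Z^m (so that L = p0 + L0 and a fundamental cell of L0
   has volume 1), the volume is
      lim_{N -> oo}  #{ v ∈ L0 | p0 + v / N ∈ S } / N^d ,   d = dim S.  *)
Definition lattice_origin (m : nat) (S : set 'rV[R]_m) : 'rV[R]_m :=
  xget 0 [set p | affine_hull S p /\ intvec p].

Definition grid_count (m : nat) (S : set 'rV[R]_m) (N : nat) : nat :=
  #|` fset_set [set v | intvec v /\ dirspace S v /\
                        S (lattice_origin S + (N%:R)^-1 *: v)] |.

Definition relvol (m : nat) (S : set 'rV[R]_m) : R :=
  limn (fun N : nat => ((grid_count S N)%:R / (N%:R) ^+ affdim S : R)).

Definition normvol (m : nat) (S : set 'rV[R]_m) : R :=
  (affdim S)`!%:R * relvol S.

End Flow.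

From HB Require Import structures.
From mathcomp Require Import all_boot all_order all_algebra.
From mathcomp Require Import finmap.
From mathcomp Require Import boolp classical_sets cardinality filter reals.
From mathcomp Require Import topology normedtype sequences.
From mathcomp Require Import ring zify.
Import Order.TTheory GRing.Theory Num.Theory.
Import numFieldNormedType.Exports.
Local Open Scope classical_set_scope.
Local Open Scope ring_scope.
Set Implicit Arguments. Unset Strict Implicit. Unset Printing Implicit Defensive.

(* Every internal vertex has exactly one out-edge and edges increase in the
   vertex order, so a flow is determined by its values on the edges leaving the
   source together with its net flows at the internal vertices, and any such
   data extend to a flow by propagating along the vertex order.  With zero
   supply at the source the flow polytope is therefore a single point, integral
   when the d_i are.  For the net flow (1,0,...,0,-1), restriction to the k+1
   source edges identifies the polytope unimodularly with the standard
   k-simplex: the lattice points of its N-th dilate are the compositions of N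
   into k+1 parts, 'C(k+N, k) of them, and 'C(k+N, k) / N^k -> 1/k!, so the
   normalized volume is k! * (1/k!) = 1. *)

Lemma cvg_binom_expn (R : realType) (d : nat) :
  (fun N : nat => ('C(d + N, d)%:R / N%:R ^+ d : R)) @ \oo --> (((d`!)%:R)^-1 : R).
Proof.
elim: d => [|d IH].
  have -> : (fun N : nat => ('C(0 + N, 0)%:R / N%:R ^+ 0 : R)) = fun _ => 1.
    by apply/funext => N; rewrite bin0 expr0 divr1.
  rewrite fact0 invr1; exact: cvg_cst.
rewrite -cvg_shiftS; rewrite -cvg_shiftS in IH.
pose h N : R := (d.+1%:R)^-1 * (1 + d.+1%:R * harmonic N).
have -> : (fun N => 'C(d.+1 + N.+1, d.+1)%:R / N.+1%:R ^+ d.+1 : R) =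
          (fun N => h N * ('C(d + N.+1, d)%:R / N.+1%:R ^+ d)).
  apply/funext => N; rewrite /h /harmonic /=.
  have binS : 'C(d.+1 + N.+1, d.+1)%:R = (d.+1 + N.+1)%:R * 'C(d + N.+1, d)%:R / d.+1%:R :> R.
    by rewrite -natrM mul_bin_diag natrM mulrAC divff ?mul1r ?pnatr_eq0.
  rewrite binS natrD exprS; field.
  by rewrite ![1 + _]addrC !natr1 expf_neq0 ?pnatr_eq0.
rewrite factS natrM invfM; apply: cvgM => //.
rewrite -[X in _ --> X]mulr1; apply: cvgM; first exact: cvg_cst.
rewrite -[X in _ --> X]addr0; apply: cvgD; first exact: cvg_cst.
rewrite -[X in _ --> X](mulr0 d.+1%:R); apply: cvgM; first exact: cvg_cst.
exact: cvg_harmonic.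
Qed.

Lemma ord_max_neq0 {n : nat} : ord_max != ord0 :> 'I_n.+2.
Proof. by rewrite -val_eqE. Qed.

Section NetFlow.
Variables (R : comNzRingType) (n m : nat) (src tgt : 'I_m -> 'I_n.+2).

Definition netflow (v : 'I_n.+2) (f : 'rV[R]_m) : R :=
  \sum_(e | src e == v) f 0 e - \sum_(e | tgt e == v) f 0 e.

Lemma netflowE v f :
  netflow v f = \sum_e f 0 e * ((src e == v)%:R - (tgt e == v)%:R).
Proof.
rewrite /netflow !(big_mkcond (fun e => _ == v)) -sumrB.
by apply: eq_bigr => e _; rewrite mulrBr !mulr_natr !mulrb.
Qed.

Fact netflow_is_linear v : linear_for *%R (netflow v).
Proof.
move=> a f g; rewrite !netflowE mulr_sumr -big_split; apply: eq_bigr => e _.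
by rewrite !mxE mulrDl mulrA.
Qed.

HB.instance Definition _ v :=
  GRing.isLinear.Build R 'rV[R]_m R *%R (netflow v) (netflow_is_linear v).

Lemma outdegE v : outdeg src v = #|[set e | src e == v]%SET|.
Proof. by apply: eq_card => e; rewrite !inE /in_set unfold_in /= asboolb. Qed.

Definition internal (w : 'I_n.+2) : bool := (0 < w < n.+1)%N.

Definition conservative (f : 'rV[R]_m) : Prop :=
  forall w, internal w -> netflow w f = 0.

Lemma internalE w : internal w = (w != ord0) && (w != ord_max).
Proof. by rewrite /internal -!val_eqE /=; have := ltn_ord w; lia. Qed.

Lemma vertexP v : [\/ v = ord0, v = ord_max | internal v].
Proof.
have [->|v0] := eqVneq v ord0; first by constructor 1.
have [->|vmax] := eqVneq v ord_max; first by constructor 2.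
by constructor 3; rewrite internalE v0 vmax.
Qed.

Lemma sum_vertices (F : 'I_n.+2 -> R) :
  \sum_v F v = F ord0 + F ord_max + \sum_(w | internal w) F w.
Proof.
rewrite (bigD1 ord0) // (bigD1 ord_max) //= addrA; congr (_ + _).
by apply: eq_bigl => w; rewrite internalE.
Qed.

Lemma sum_netflow f : \sum_v netflow v f = 0.
Proof.
rewrite (eq_bigr _ (fun v _ => netflowE v f)) exchange_big big1 // => e _.
rewrite -mulr_sumr sumrB (bigD1 (src e)) // [X in _ - X](bigD1 (tgt e)) //=.
by rewrite !eqxx !big1 ?addr0 ?subrr ?mulr0 // => v /negbTE; rewrite eq_sym => ->.
Qed.

Lemma netflow_sink f :
  netflow ord_max f = - netflow ord0 f - \sum_(w | internal w) netflow w f.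
Proof.
have := sum_netflow f; rewrite sum_vertices => /eqP.
by rewrite -addrA addrCA addr_eq0 opprD => /eqP.
Qed.

End NetFlow.

Section UniqueOutEdges.
Variables (R : comNzRingType) (n m : nat) (src tgt : 'I_m -> 'I_n.+2).
Hypothesis src_lt_tgt : forall e, (src e < tgt e)%N.
Hypothesis outdeg_internal : forall w, internal w -> outdeg src w = 1%N.

Local Notation netflow := (netflow src tgt).

Lemma tgt_neq0 e : tgt e != ord0.
Proof. by rewrite -val_eqE -lt0n (leq_ltn_trans _ (src_lt_tgt e)). Qed.

Lemma internal_src e : src e != ord0 -> internal (src e).
Proof.
rewrite /internal -val_eqE /= -lt0n => ->.
by have := src_lt_tgt e; have := ltn_ord (tgt e); lia.
Qed.

Lemma netflow_source (f : 'rV[R]_m) :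
  netflow ord0 f = \sum_(e | src e == ord0) f 0 e.
Proof. by rewrite /netflow [X in _ - X]big_pred0 ?subr0 // => e; apply/negbTE/tgt_neq0. Qed.

Lemma internal_out_edge w : internal w -> exists e, forall e', (src e' == w) = (e' == e).
Proof.
move=> /outdeg_internal; rewrite outdegE => /eqP /cards1P [e /setP out_w].
exists e => e'.
by have := out_w e'; rewrite !inE.
Qed.

Lemma flow_eq (f g : 'rV[R]_m) :
  (forall e, src e == ord0 -> f 0 e = g 0 e) ->
  (forall w, internal w -> netflow w f = netflow w g) -> f = g.
Proof.
move=> fg_source fg_internal.
suff fg k e : (src e < k)%N -> f 0 e = g 0 e by apply/rowP => e; apply: (fg (src e).+1).
elim: k e => // k IH e; rewrite ltnS leq_eqVlt => /predU1P [src_e|]; last exact: IH.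
have [/eqP/fg_source //|/internal_src w_int] := eqVneq (src e) ord0.
have [e1 out_w] := internal_out_edge w_int.
have in_w : \sum_(e' | tgt e' == src e) f 0 e' = \sum_(e' | tgt e' == src e) g 0 e'.
  by apply: eq_bigr => e' /eqP tgt_e'; apply: IH; rewrite -src_e -tgt_e'.
have /eqP -> : e == e1 by rewrite -out_w.
by move: (fg_internal _ w_int); rewrite /netflow in_w !(big_pred1 e1 out_w) => /addIr.
Qed.

(* [outflow c b k w] is the flow on the out-edge of [w] (inflow plus [b w]);
   since edges increase, any fuel [k > w] gives the same value. *)
Fixpoint outflow (c : 'rV[R]_m) (b : 'I_n.+2 -> R) (k : nat) (w : 'I_n.+2) : R :=
  if k is k'.+1 then
    \sum_(e | tgt e == w) (if src e == ord0 then c 0 e else outflow c b k' (src e)) + b w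
  else 0.

Definition extension (c : 'rV[R]_m) (b : 'I_n.+2 -> R) : 'rV[R]_m :=
  \row_e (if src e == ord0 then c 0 e else outflow c b n.+1 (src e)).

Lemma outflowS c b k (w : 'I_n.+2) : (w < k)%N -> outflow c b k.+1 w = outflow c b k w.
Proof.
elim: k w => // k IH w lt_w /=; congr (_ + _); apply: eq_bigr => e /eqP tgt_e.
by case: ifP => // _; apply: IH; have := src_lt_tgt e; rewrite tgt_e; lia.
Qed.

Lemma extension_source c b e : src e == ord0 -> extension c b 0 e = c 0 e.
Proof. by rewrite mxE => ->. Qed.

Lemma netflow_extension c b w : internal w -> netflow w (extension c b) = b w.
Proof.
move=> w_int; have [e1 out_w] := internal_out_edge w_int.
have /eqP src_e1 : src e1 == w by rewrite out_w.
have w_n : (w <= n)%N by move: w_int; rewrite /internal ltnS => /andP[].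
have /negPf w_neq0 : w != ord0 by move: w_int; rewrite internalE => /andP[].
rewrite /netflow (big_pred1 e1 out_w) mxE src_e1 w_neq0 /=.
set inflow := \sum_(e | tgt e == w) _.
suff -> : \sum_(e | tgt e == w) extension c b 0 e = inflow by rewrite addrAC subrr add0r.
apply: eq_bigr => e /eqP tgt_e; rewrite mxE; case: ifP => // _.
by apply: outflowS; have := src_lt_tgt e; rewrite tgt_e; lia.
Qed.

Lemma extension_closed (S : addrClosed R) (c : 'rV[R]_m) (b : 'I_n.+2 -> R) :
  (forall e, src e == ord0 -> c 0 e \in S) -> (forall w, internal w -> b w \in S) ->
  forall e, extension c b 0 e \in S.
Proof.
move=> cS bS.
have outflowS k w : internal w -> outflow c b k w \in S.
  elim: k w => [|k IH] w w_int /=; first exact: rpred0.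
  rewrite rpredD ?bS // rpred_sum // => e _.
  by case: ifPn => [/cS //|/internal_src]; apply: IH.
by move=> e; rewrite mxE; case: ifPn => [/cS //|/internal_src]; apply: outflowS.
Qed.

End UniqueOutEdges.

Lemma sub_affine_hull (R : realType) (m : nat) (S : set 'rV[R]_m) :
  S `<=` affine_hull S.
Proof.
move=> x Sx; exists 1%N, (fun=> x), (fun=> 1).
by rewrite !big_ord1 scale1r.
Qed.

Section FlowPolytope.
Variables (R : realType) (n m : nat) (src tgt : 'I_m -> 'I_n.+2).
Variable a : 'I_n.+2 -> R.

Local Notation netflow := (netflow src tgt).
Local Notation P := (flow_polytope src tgt a).

Lemma netflow_polytope f v : P f -> netflow v f = a v.
Proof. by case=> _; apply. Qed.

Lemma affine_hull_netflow x v : affine_hull P x -> netflow v x = a v.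
Proof.
move=> [k [p [c [Pp [sum_c ->]]]]]; rewrite linear_sum /=.
under eq_bigr => i _ do rewrite linearZ /= (netflow_polytope v (Pp i)).
by rewrite -mulr_suml sum_c mul1r.
Qed.

Lemma dirspace_netflow u v : dirspace P u -> netflow v u = 0.
Proof.
by move=> [x [y [Px [Py ->]]]]; rewrite linearB /= !(affine_hull_netflow v) // subrr.
Qed.

Lemma flow_polytopeZ (c : R) f :
  0 < c -> flow_polytope src tgt (fun v => c * a v) (c *: f) <-> P f.
Proof.
move=> c_gt0; have c_neq0 : c != 0 by rewrite gt_eqF.
split=> [[cf_ge0 cf_net]|[f_ge0 f_net]]; split=> [e|v].
- by have := cf_ge0 e; rewrite mxE pmulr_rge0.
- by apply: (mulfI c_neq0); rewrite -(cf_net v) -/(netflow v (c *: f)) linearZ.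
- by rewrite mxE mulr_ge0 ?(ltW c_gt0).
- by rewrite -/(netflow v (c *: f)) linearZ /=; congr (_ * _); apply: f_net.
Qed.

End FlowPolytope.

Section SourceFreeSupply.
Variables (R : realType) (n m : nat) (src tgt : 'I_m -> 'I_n.+2).
Hypothesis src_lt_tgt : forall e, (src e < tgt e)%N.
Hypothesis outdeg_internal : forall w, internal w -> outdeg src w = 1%N.
Variable a : 'I_n.+2 -> R.
Hypothesis a_source : a ord0 = 0.
Hypothesis a_sink : a ord_max = - \sum_(w | internal w) a w.

Local Notation netflow := (netflow src tgt).
Local Notation f0 := (extension src tgt 0 a).

Lemma netflow_extension0 v : netflow v f0 = a v.
Proof.
have net_source : netflow ord0 f0 = 0.
  rewrite netflow_source // big1 // => e e_src.
  by rewrite extension_source // mxE.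
case: (vertexP v) => [->|->|v_int]; rewrite ?a_source //.
  rewrite netflow_sink net_source a_sink oppr0 sub0r; congr (- _).
  by apply: eq_bigr => w w_int; apply: netflow_extension.
exact: netflow_extension.
Qed.

Lemma flow_polytope_source_free :
  (forall w, internal w -> 0 <= a w) -> flow_polytope src tgt a = [set f0].
Proof.
move=> a_ge0; apply/seteqP; split=> f /=.
  move=> Pf; apply: (flow_eq src_lt_tgt outdeg_internal) => [e e_src|w w_int].
    rewrite extension_source // mxE.
    have := netflow_polytope ord0 Pf; rewrite netflow_source // a_source.
    by move/psumr_eq0P; apply => // e' _; apply: Pf.1.
  by rewrite netflow_extension // (netflow_polytope w Pf).
move=> ->; split=> [e|v]; last exact: netflow_extension0.
rewrite -nnegrE; apply: (extension_closed src_lt_tgt) => [e' _|w /a_ge0];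
  by rewrite ?mxE nnegrE.
Qed.

Lemma K_G_source_free : (forall w, internal w -> a w \is a Num.nat) -> K_G src tgt a = 1%N.
Proof.
move=> a_nat; have a_ge0 w : internal w -> 0 <= a w by move/a_nat; apply: natr_ge0.
rewrite /K_G; suff -> : [set f | flow_polytope src tgt a f /\ intvec f] = [set f0].
  by rewrite fset_set1 cardfs1.
rewrite flow_polytope_source_free //; apply/seteqP; split=> f /=; first by case.
move=> ->; split=> // e; apply/intr_nat.
by apply: (extension_closed src_lt_tgt) => // e' _; rewrite mxE rpred0.
Qed.

End SourceFreeSupply.

Section UnitFlowPolytope.
Variables (R : realType) (n m : nat) (src tgt : 'I_m -> 'I_n.+2).
Hypothesis src_lt_tgt : forall e, (src e < tgt e)%N.
Hypothesis outdeg_internal : forall w, internal w -> outdeg src w = 1%N.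
Variables (k : nat) (ee : 'I_k.+1 -> 'I_m).
Hypothesis ee_inj : injective ee.
Hypothesis ee_source : forall e, (src e == ord0) = (e \in codom ee).

Local Notation netflow := (netflow src tgt).
Local Notation conservative := (@conservative R n m src tgt).

Definition unit_netflow (v : 'I_n.+2) : R :=
  if v == ord0 then 1 else if v == ord_max then -1 else 0.

Local Notation S := (flow_polytope src tgt unit_netflow).

Lemma unit_netflow_source : unit_netflow ord0 = 1.
Proof. by rewrite /unit_netflow eqxx. Qed.

Lemma unit_netflow_sink : unit_netflow ord_max = -1.
Proof. by rewrite /unit_netflow eqxx (negPf ord_max_neq0). Qed.

Lemma unit_netflow_internal w : internal w -> unit_netflow w = 0.
Proof. by rewrite internalE /unit_netflow => /andP [/negPf -> /negPf ->]. Qed.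

Lemma ee_src j : src (ee j) == ord0.
Proof. by rewrite ee_source codom_f. Qed.

Lemma netflow_conservative f v :
  conservative f -> netflow v f = (\sum_(e | src e == ord0) f 0 e) * unit_netflow v.
Proof.
move=> f_cons; rewrite -(netflow_source src_lt_tgt).
case: (vertexP v) => [->|->|v_int]; first by rewrite unit_netflow_source mulr1.
  by rewrite unit_netflow_sink mulrN1 netflow_sink big1 ?subr0.
by rewrite unit_netflow_internal // mulr0 f_cons.
Qed.

Lemma sum_source_edges (F : 'I_m -> R) :
  \sum_(e | src e == ord0) F e = \sum_j F (ee j).
Proof.
rewrite (eq_bigl (mem (codom ee))) => [|e]; last by rewrite ee_source.
by rewrite -big_uniq ?big_image //= (map_inj_uniq ee_inj) enum_uniq.
Qed.

Lemma sum_ee_delta (c : 'I_k.+1 -> R) i : \sum_j c j * (ee i == ee j)%:R = c i.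
Proof.
rewrite (bigD1 i) //= eqxx mulr1 big1 ?addr0 // => j j_neq_i.
by rewrite (inj_eq ee_inj) eq_sym (negPf j_neq_i) mulr0.
Qed.

Definition unit_flow (e : 'I_m) : 'rV[R]_m := extension src tgt (delta_mx 0 e) (fun=> 0).

Lemma unit_flow_source e e' : src e' == ord0 -> unit_flow e 0 e' = (e' == e)%:R.
Proof. by move=> e'_src; rewrite extension_source // mxE eqxx. Qed.

Lemma unit_flow_nat e e' : unit_flow e 0 e' \is a Num.nat.
Proof.
by apply: (extension_closed src_lt_tgt) => [e'' _|w _]; rewrite ?mxE ?natr_nat ?rpred0.
Qed.

Lemma conservative_extension0 c : conservative (extension src tgt c (fun=> 0)).
Proof. by move=> w w_int; rewrite netflow_extension. Qed.

Lemma netflow_unit_flow e v : src e == ord0 -> netflow v (unit_flow e) = unit_netflow v.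
Proof.
move=> e_src; rewrite netflow_conservative; last exact: conservative_extension0.
rewrite (bigD1 e) //= unit_flow_source // eqxx big1 ?addr0 ?mul1r //.
move=> e' /andP [e'_src /negPf].
by rewrite unit_flow_source // => ->.
Qed.

Lemma unit_flow_polytope e : src e == ord0 -> S (unit_flow e).
Proof.
by move=> e_src; split=> [e'|v]; [apply/natr_ge0/unit_flow_nat | apply: netflow_unit_flow].
Qed.

Lemma conservative_unit_flows f :
  conservative f -> f = \sum_j f 0 (ee j) *: unit_flow (ee j).
Proof.
move=> f_cons; apply: (flow_eq src_lt_tgt outdeg_internal) => [e|w w_int].
  rewrite ee_source => /codomP [i ->]; rewrite summxE.
  under eq_bigr => j _ do rewrite mxE unit_flow_source ?ee_src //.
  by rewrite sum_ee_delta.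
rewrite f_cons // linear_sum big1 // => j _.
by rewrite linearZ /= netflow_extension // mulr0.
Qed.

Lemma dirspaceP u : dirspace S u <-> forall v, netflow v u = 0.
Proof.
split=> [Du v|u_net]; first exact: dirspace_netflow Du.
pose u0 := unit_flow (ee ord0).
have Su0 : S u0 by apply/unit_flow_polytope/ee_src.
have u0_cons : conservative (u + u0).
  move=> w w_int; rewrite linearD /= u_net netflow_unit_flow ?ee_src //.
  by rewrite add0r unit_netflow_internal.
exists (u + u0), u0; split; last by split; [apply: sub_affine_hull | rewrite addrK].
exists k.+1, (unit_flow \o ee), (fun j => (u + u0) 0 (ee j)); split.
  by move=> j; apply/unit_flow_polytope/ee_src.
split; last exact: conservative_unit_flows.
rewrite -sum_source_edges -(netflow_source src_lt_tgt) linearD /= u_net add0r.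
by rewrite netflow_unit_flow ?ee_src // unit_netflow_source.
Qed.

Lemma dirspace_rank_le r (A : 'M[R]_(r, m)) :
  row_free A -> (forall i, dirspace S (row i A)) -> (r <= k)%N.
Proof.
move=> /eqP rkA DA.
pose B : 'M[R]_(r, k.+1) := \matrix_(i, j) A i (ee j).
pose U : 'M[R]_(k.+1, m) := \matrix_j unit_flow (ee j).
have A_BU : A = B *m U.
  apply/row_matrixP => i; have Ai_cons : conservative (row i A).
    by move=> w _; move/dirspaceP: (DA i); apply.
  rewrite row_mul mulmx_sum_row {1}(conservative_unit_flows Ai_cons).
  by apply: eq_bigr => j _; rewrite rowK !mxE.
have B1 : B *m const_mx 1 = 0 :> 'cV[R]_r.
  apply/matrixP => i j; rewrite !mxE.
  transitivity (netflow ord0 (row i A)); last exact: (dirspaceP _).1 (DA i) ord0.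
  rewrite netflow_source // sum_source_edges.
  by apply: eq_bigr => j' _; rewrite !mxE mulr1.
have rkB : (\rank B <= k)%N.
  rewrite -ltnS ltn_neqAle rank_leq_col andbT; apply/negP => /row_fullP [B' B'B].
  have := congr1 (fun M => (B' *m M) 0 0) B1.
  by rewrite mulmxA B'B mul1mx mulmx0 !mxE => /eqP; rewrite oner_eq0.
by rewrite -rkA A_BU (leq_trans (mxrankM_maxl _ _)).
Qed.

Lemma dirspace_basis :
  exists A : 'M[R]_(k, m), row_free A /\ forall i, dirspace S (row i A).
Proof.
pose A : 'M[R]_(k, m) :=
  \matrix_(i, e) (unit_flow (ee (lift ord0 i)) 0 e - unit_flow (ee ord0) 0 e).
exists A; split.
  pose Sel : 'M[R]_(m, k) := \matrix_(e, j) (e == ee (lift ord0 j))%:R.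
  apply/row_freeP; exists Sel; apply/matrixP => i j.
  rewrite !mxE (bigD1 (ee (lift ord0 j))) //= big1 => [|e /negPf e_neq]; last first.
    by rewrite [Sel _ _]mxE e_neq mulr0.
  rewrite [Sel _ _]mxE eqxx mulr_natr mulr1n addr0 [A _ _]mxE !unit_flow_source ?ee_src //.
  rewrite !(inj_eq ee_inj) (inj_eq lift_inj) [lift _ _ == _]eq_sym.
  by rewrite (negPf (neq_lift _ _)) subr0 eq_sym.
move=> i; have -> : row i A = unit_flow (ee (lift ord0 i)) - unit_flow (ee ord0).
  by apply/rowP => e; rewrite !mxE.
apply/dirspaceP => v.
by rewrite linearB /= !netflow_unit_flow ?ee_src // subrr.
Qed.

Lemma affdim_unit : affdim S = k.
Proof.
apply/eqP; rewrite eqn_leq; apply/andP; split.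
  by apply/bigmax_leqP => r /asboolP [A [/dirspace_rank_le]]; apply.
have k_lt : (k < m.+1)%N.
  by have := leq_card _ ee_inj; rewrite !card_ord ltnS; apply: ltnW.
apply: (@leq_bigmax_cond _ _ (fun r : 'I_m.+1 => (r : nat)) (Ordinal k_lt)).
exact/asboolP/dirspace_basis.
Qed.

Lemma lattice_origin_unit : affine_hull S (lattice_origin S) /\ intvec (lattice_origin S).
Proof.
apply: (@xgetPex _ 0 [set p | affine_hull S p /\ intvec p]).
exists (unit_flow (ee ord0)); split; last by move=> e; apply/intr_nat/unit_flow_nat.
exact/sub_affine_hull/unit_flow_polytope/ee_src.
Qed.

Definition compositions N : {set k.+1.-tuple 'I_N.+1} :=
  [set t : k.+1.-tuple 'I_N.+1 | \sum_(i <- t) (i : nat) == N]%SET.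

Definition tuple_flow N (t : k.+1.-tuple 'I_N.+1) : 'rV[R]_m :=
  \sum_j (tnth t j : nat)%:R *: unit_flow (ee j).

Lemma tuple_flow_source N (t : k.+1.-tuple 'I_N.+1) i :
  tuple_flow t 0 (ee i) = (tnth t i : nat)%:R.
Proof.
rewrite summxE -[RHS](sum_ee_delta (fun j => (tnth t j : nat)%:R)).
by apply: eq_bigr => j _; rewrite mxE unit_flow_source ?ee_src.
Qed.

Lemma tuple_flow_inj N : injective (@tuple_flow N).
Proof.
move=> t t' tt'; apply: eq_from_tnth => i; apply/val_inj/eqP.
by rewrite -(eqr_nat R) -!tuple_flow_source tt'.
Qed.

Lemma tuple_flow_nat N (t : k.+1.-tuple 'I_N.+1) e : tuple_flow t 0 e \is a Num.nat.
Proof. by rewrite summxE rpred_sum // => j _; rewrite mxE rpredM ?natr_nat ?unit_flow_nat. Qed.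

Lemma netflow_tuple_flow N (t : k.+1.-tuple 'I_N.+1) v :
  netflow v (tuple_flow t) = (\sum_(i <- t) (i : nat))%:R * unit_netflow v.
Proof.
rewrite linear_sum big_tuple natr_sum mulr_suml; apply: eq_bigr => j _.
by rewrite linearZ /= netflow_unit_flow ?ee_src.
Qed.

Lemma scaled_int_flowP N f :
  flow_polytope src tgt (fun v => N%:R * unit_netflow v) f /\ intvec f <->
  exists2 t, t \in compositions N & f = tuple_flow t.
Proof.
split=> [[[f_ge0 f_net] f_int]|[t /[!inE] /eqP t_sum ->]]; last first.
  split; last by move=> e; apply/intr_nat/tuple_flow_nat.
  split=> [e|v]; first exact/natr_ge0/tuple_flow_nat.
  by rewrite -/(netflow v _) netflow_tuple_flow t_sum.
have f_nat e : f 0 e \is a Num.nat by rewrite natrEint f_int f_ge0.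
have sum_f : \sum_j f 0 (ee j) = N%:R.
  rewrite -sum_source_edges -(netflow_source src_lt_tgt) /netflow.
  by rewrite (f_net ord0) unit_netflow_source mulr1.
have f_lt j : (Num.truncn (f 0%R (ee j)) < N.+1)%N.
  rewrite ltnS -(ler_nat R) truncnK // -sum_f (bigD1 j) //= lerDl.
  by apply: sumr_ge0 => j' _.
pose t := [tuple (inord (Num.truncn (f 0 (ee j))) : 'I_N.+1) | j < k.+1].
have tE j : (tnth t j : nat)%:R = f 0 (ee j) by rewrite tnth_mktuple inordK ?truncnK.
exists t.
  by rewrite inE -(eqr_nat R) big_tuple natr_sum (eq_bigr _ (fun j _ => tE j)) sum_f.
rewrite [LHS]conservative_unit_flows => [|w w_int]; last first.
  by rewrite /netflow (f_net w) unit_netflow_internal ?mulr0.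
by apply: eq_bigr => j _; rewrite tE.
Qed.

Lemma grid_pointE N u : (0 < N)%N ->
  let p0 := lattice_origin S in
  intvec u /\ dirspace S u /\ S (p0 + N%:R^-1 *: u) <->
  flow_polytope src tgt (fun v => N%:R * unit_netflow v) (N%:R *: p0 + u) /\
  intvec (N%:R *: p0 + u).
Proof.
move=> N_gt0 p0; have [p0_aff p0_int] := lattice_origin_unit.
have N_pos : 0 < N%:R :> R by rewrite ltr0n.
have scaleE : N%:R *: p0 + u = N%:R *: (p0 + N%:R^-1 *: u).
  by rewrite scalerDr scalerA divff ?pnatr_eq0 -?lt0n // scale1r.
have Np0_int e : (N%:R *: p0) 0 e \is a Num.int by rewrite mxE rpredM ?natr_int.
split=> [[u_int [_ Sx]]|[Pz z_int]].
  by split=> [|e]; [rewrite scaleE flow_polytopeZ | rewrite mxE rpredD].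
have u_int : intvec u by move=> e; have := z_int e; rewrite mxE rpredDl.
split=> //; split; last by apply/(flow_polytopeZ _ _ _ _ N_pos); rewrite -scaleE.
apply/dirspaceP => v; have := netflow_polytope v Pz.
rewrite linearD linearZ /= (affine_hull_netflow v p0_aff).
by move/(canRL (addKr _)) ->; rewrite addNr.
Qed.

Lemma grid_set N : (0 < N)%N ->
  [set u | intvec u /\ dirspace S u /\ S (lattice_origin S + N%:R^-1 *: u)] =
  [set` [fset tuple_flow t - N%:R *: lattice_origin S | t in compositions N]%fset].
Proof.
move=> N_gt0; apply/seteqP; split=> u /=.
  move=> /(grid_pointE u N_gt0)/scaled_int_flowP [t t_comp tE].
  by apply/imfsetP; exists t => //; rewrite -tE addrAC subrr add0r.
move=> /imfsetP [t t_comp ->]; apply/(grid_pointE _ N_gt0)/scaled_int_flowP.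
by exists t; rewrite // addrC subrK.
Qed.

Lemma grid_count_unit N : (0 < N)%N -> grid_count S N = 'C(k + N, k).
Proof.
move=> N_gt0; rewrite /grid_count grid_set // set_fsetK.
rewrite card_imfset => [|t t' /addIr/tuple_flow_inj //].
rewrite -card_ord_partitions cardE; apply/perm_size/uniq_perm => [||t].
- exact: enum_finmem_uniq.
- exact: enum_uniq.
- by rewrite enum_finmemE.
Qed.

Lemma normvol_unit : normvol S = 1.
Proof.
rewrite /normvol affdim_unit.
suff -> : relvol S = (k`!%:R)^-1 by rewrite divff // pnatr_eq0 -lt0n fact_gt0.
apply: cvg_lim => //; rewrite affdim_unit -cvg_shiftS.
rewrite (_ : (fun N => _) = fun N => 'C(k + N.+1, k)%:R / N.+1%:R ^+ k : R).
  by rewrite (cvg_shiftS (fun N => 'C(k + N, k)%:R / N%:R ^+ k : R)); apply: cvg_binom_expn.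
by apply/funext => N; rewrite /= grid_count_unit.
Qed.

End UnitFlowPolytope.

Lemma source_edge_enum (n m : nat) (src : 'I_m -> 'I_n.+2) :
  (0 < outdeg src ord0)%N ->
  exists k (ee : 'I_k.+1 -> 'I_m),
    injective ee /\ forall e, (src e == ord0) = (e \in codom ee).
Proof.
rewrite outdegE; set E := [set e | src e == ord0]%SET.
case E_card : #|E| => [//|k] _.
exists k, (fun j => enum_val (cast_ord (esym E_card) j)); split.
  by move=> i j /enum_val_inj /cast_ord_inj.
move=> e; apply/idP/codomP => [e_src|[j ->]].
  have e_E : e \in E by rewrite inE.
  by exists (cast_ord E_card (enum_rank_in e_E e)); rewrite cast_ordK enum_rankK_in.
by have := enum_valP (cast_ord (esym E_card) j); rewrite inE.
Qed.

Unset Implicit Arguments.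

Theorem lemma3p2 (R : realType) (n m : nat) (src tgt : 'I_m -> 'I_(n.+2))
  (Hord : forall e : 'I_m, (src e < tgt e)%N)
  (Hsource : forall v : 'I_(n.+2), indeg tgt v = 0%N <-> v = ord0)
  (Hsink : forall v : 'I_(n.+2), outdeg src v = 0%N <-> v = ord_max)
  (Hout : forall i : 'I_(n.+2), (0 < i < n.+1)%N -> outdeg src i = 1%N) :
  let d : 'I_(n.+2) -> R := fun i => (indeg tgt i)%:R - 1 in
  normvol (flow_polytope src tgt
             (fun v : 'I_(n.+2) =>
               (if v == ord0 then 1 else if v == ord_max then -1 else 0) : R))
    = 1 /\
  K_G src tgt
    (fun v : 'I_(n.+2) =>
       (if v == ord0 then 0
        else if v == ord_max then - \sum_(i : 'I_(n.+2) | (0 < i < n.+1)%N) d i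
        else d v) : R) = 1%N.
Proof.
move=> d; have src_out : (0 < outdeg src ord0)%N.
  by rewrite lt0n; apply: contra_neq (@ord_max_neq0 n) => /Hsink ->.
have [k [ee [ee_inj ee_source]]] := source_edge_enum src_out.
split; first exact: (normvol_unit R Hord Hout ee_inj ee_source).
have d_nat w : internal w -> d w \is a Num.nat.
  move=> w_int; have : indeg tgt w != 0%N.
    by apply/eqP => /Hsource w0; move: w_int; rewrite internalE w0 eqxx.
  by rewrite /d -lt0n => /prednK <-; rewrite -natr1 addrK natr_nat.
have internal_neq (w : 'I_n.+2) : internal w -> (w == ord0) = false /\ (w == ord_max) = false.
  by rewrite internalE => /andP [/negPf -> /negPf ->].
apply: (K_G_source_free Hord Hout) => /= [||w w_int]; rewrite ?eqxx ?(negPf ord_max_neq0) //.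
  by congr (- _); apply: eq_bigr => w /internal_neq [-> ->].
by have [-> ->] := internal_neq w w_int; apply: d_nat.
Qed.
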